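(* Let $S=s_1,\ldots,s_n$ be a sequence of positive real numbers, $\gamma>0$, $k$ a positive integer and $\epsilon>0$. Let $(L^*,\alpha^*,\beta^* )$ be an optimal solution of $\textsc{Exp}$ for $S,\gamma,k$, let $g=(\prod_{i=1}^n s_i)^{1/n}$ and $\psi=n\log g$. Let $(L,\alpha,\beta)$ be the output of $\textit{ApproxExp}(S,\gamma,k,\epsilon)$. Then \[ \mathrm{score}_{\exp}(L,S;\alpha,\beta,\gamma)-\psi\le(1+\epsilon)\big(\mathrm{score}_{\exp}(L^*,S;\alpha^*,\beta^*,\gamma)-\psi\big). \] Moreover, if $g\ge1$, then $\mathrm{score}_{\exp}(L,S;\alpha,\beta,\gamma)\le(1+\epsilon)\,\mathrm{score}_{\exp}(L^*,S;\alpha^*,\beta^*,\gamma)$.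
   Context: A level sequence is $L=\ell_1,\ldots,\ell_n$ of integers with $0\le\ell_i\le k$; set $\ell_0=0$. The penalty is $\mathrm{pen}(x,y)=\max(y-x,0)\,\gamma\log n$; $p_{\exp}(s;\lambda)=\lambda e^{-\lambda s}$; for $\alpha\ge1$, $\beta>0$, $\mathrm{score}_{\exp}(L,S;\alpha,\beta,\gamma)=\sum_{i=1}^n\big[-\log p_{\exp}(s_i;\beta\alpha^{\ell_i})+\mathrm{pen}(\ell_{i-1},\ell_i)\big]$. Problem $\textsc{Exp}$: given $S,\gamma,k$, find $L$ and parameters $\alpha$ (the paper uses $\alpha>1$) and $\beta>0$ minimizing this score. $\textit{Viterbi}(S,\alpha,\beta,\gamma,k,p_{\exp})$ returns a level sequence minimizing the score for fixed $\alpha,\beta$. Algorithm $\textit{ExpAlpha}(S,\alpha,\gamma,k,\epsilon)$: let $\mu=\frac1n\sum_i s_i$ and $\beta=1/\mu$; while $\beta\ge1/(\alpha^k\mu)$: run $\textit{Viterbi}(S,\alpha,\beta,\gamma,k,p_{\exp})$ and set $\beta\leftarrow\beta/(1+\epsilon)$; return the best tested $(L,\beta)$. Algorithm $\textit{ApproxExp}(S,\gamma,k,\epsilon)$: let $\alpha=(\max_i s_i)/(\min_i s_i)$ and $c=(1+\epsilon)^{1/(2k)}$; while $\alpha\ge1$: run $\textit{ExpAlpha}(S,\alpha,\gamma,k,\epsilon/2)$ and set $\alpha\leftarrow\alpha/c$. Return the observed triple $(L,\alpha,\beta)$ with the smallest score. *)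

From Stdlib Require Import Reals Lra Lia.
Open Scope R_scope.

(* Data: a sequence S = s_1, ..., s_n is modelled by s : nat -> R, with only
   indices 1..n relevant.  A level sequence L = l_1..l_n is L : nat -> nat,
   only indices 1..n relevant; l_0 = 0 is hard-coded in [lprev]. *)

Fixpoint sumR (f : nat -> R) (n : nat) : R :=
  match n with O => 0 | S m => sumR f m + f (S m) end.

Fixpoint prodR (f : nat -> R) (n : nat) : R :=
  match n with O => 1 | S m => prodR f m * f (S m) end.

(* max / min over i = 1..n (meaningful for n >= 1) *)
Fixpoint maxS (s : nat -> R) (n : nat) : R :=
  match n with O => s 1%nat | S m => Rmax (maxS s m) (s (S m)) end.
Fixpoint minS (s : nat -> R) (n : nat) : R :=
  match n with O => s 1%nat | S m => Rmin (minS s m) (s (S m)) end.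

Definition valid_levels (n k : nat) (L : nat -> nat) : Prop :=
  forall i, (1 <= i <= n)%nat -> (L i <= k)%nat.

Definition lprev (L : nat -> nat) (i : nat) : nat :=
  match i with S (S j) => L (S j) | _ => O end.

Definition pen (n : nat) (gamma : R) (x y : nat) : R :=
  Rmax (INR y - INR x) 0 * gamma * ln (INR n).

Definition p_exp (s lambda : R) : R := lambda * exp (- lambda * s).

Definition score_exp (n : nat) (s : nat -> R) (L : nat -> nat)
    (alpha beta gamma : R) : R :=
  sumR (fun i => - ln (p_exp (s i) (beta * alpha ^ (L i)))
                 + pen n gamma (lprev L i) (L i)) n.

Definition viterbi_spec (n k : nat) (s : nat -> R) (gamma alpha beta : R)
    (L : nat -> nat) : Prop :=
  valid_levels n k L /\
  forall L', valid_levels n k L' ->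
    score_exp n s L alpha beta gamma <= score_exp n s L' alpha beta gamma.

Definition mean (n : nat) (s : nat -> R) : R := sumR s n / INR n.

(* ApproxExp: alpha runs through alpha0 / c^j while >= 1, where
   alpha0 = max s / min s, c = (1+eps)^(1/(2k)). *)
Definition approx_alpha (n k : nat) (s : nat -> R) (eps : R) (j : nat) : R :=
  (maxS s n / minS s n) / (Rpower (1 + eps) (/ (2 * INR k))) ^ j.

(* ExpAlpha(S, alpha, gamma, k, eps'): beta runs through (1/mu)/(1+eps')^m
   while beta >= 1/(alpha^k mu). *)
Definition expalpha_beta (n : nat) (s : nat -> R) (eps' : R) (m : nat) : R :=
  (/ mean n s) / (1 + eps') ^ m.

(* The pairs (alpha, beta) on which ApproxExp(S, gamma, k, eps) runs Viterbi
   (ExpAlpha being called with eps/2).  Both sequences are strictly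
   decreasing, so the indices reached by the while-loops are exactly those
   satisfying the loop condition. *)
Definition tested_pair (n k : nat) (s : nat -> R) (eps alpha beta : R) : Prop :=
  exists j m : nat,
    alpha = approx_alpha n k s eps j /\ 1 <= alpha /\
    beta = expalpha_beta n s (eps / 2) m /\
    / (alpha ^ k * mean n s) <= beta.

Definition geo_mean (n : nat) (s : nat -> R) : R := Rpower (prodR s n) (/ INR n).
Definition psi (n : nat) (s : nat -> R) : R := INR n * ln (geo_mean n s).

(* Writing x_i = beta alpha^(l_i) s_i, the score minus psi is the sum of x_i - ln x_i
   (minimal at x_i = 1) plus the penalties, so it suffices to move a feasible triple
   (Lopt, aopt, bopt) onto a tested grid point, keeping Lopt, at relative cost 1 + eps.
   - If aopt > max s / min s, some beta' makes every rate beta' (max s / min s)^l lie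
     between bopt aopt^l and the band [1/max s, 1/min s] of the per-term optima 1/s_i,
     so no term gets worse: the admissible intervals for beta' pairwise intersect.
   - For fixed alpha, beta = n / sum_i alpha^(l_i) s_i is optimal.
   - Rounding alpha up on the grid multiplies alpha^k by at most c^k = sqrt(1 + eps); rounding
     the compensated beta up changes it by at most 1 + eps/2.  Every rate thus moves by a
     factor in [1/(1 + eps/2), 1 + eps/2], which costs at most a factor 1 + eps on each term
     since x - ln x >= 1 and ln x <= x / 2.
   Viterbi does at least as well as Lopt at that grid point, and the output at least as well. *)

From Stdlib Require Import Reals Lra Lia.
Open Scope R_scope.

Lemma ln_le_compat x y : 0 < x -> x <= y -> ln x <= ln y.
Proof.
  intros Hx [Hlt | ->]; [left; exact (ln_increasing x y Hx Hlt) | lra].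
Qed.

Lemma ln_le_sub1 x : 0 < x -> ln x <= x - 1.
Proof. intros Hx. pose proof (exp_ineq1_le (ln x)). rewrite exp_ln in H; lra. Qed.

Lemma ln_le_half x : 0 < x -> ln x <= x / 2.
Proof.
  intros Hx. pose proof (sqrt_lt_R0 x Hx) as Hsq.
  assert (Hln : ln x = 2 * ln (sqrt x)).
  { rewrite <- (sqrt_sqrt x) at 1 by lra. rewrite ln_mult by lra. ring. }
  pose proof (ln_le_sub1 _ Hsq). pose proof (sqrt_sqrt x (Rlt_le _ _ Hx)).
  pose proof (pow2_ge_0 (sqrt x - 2)). simpl in *. nra.
Qed.

Definition excess (x : R) : R := x - ln x.

Lemma excess_ge1 x : 0 < x -> 1 <= excess x.
Proof. intros Hx. pose proof (ln_le_sub1 x Hx). unfold excess; lra. Qed.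

Lemma excess_antitone x y : 0 < x -> x <= y <= 1 -> excess y <= excess x.
Proof.
  intros Hx [Hxy Hy1]. unfold excess.
  pose proof (ln_le_sub1 (x / y) ltac:(apply Rdiv_lt_0_compat; lra)) as Hr.
  unfold Rdiv in Hr. rewrite ln_mult, ln_Rinv in Hr by (try apply Rinv_0_lt_compat; lra).
  assert (x * / y - 1 <= x - y).
  { apply (Rmult_le_reg_r y); [lra|]. field_simplify; try lra. nra. }
  lra.
Qed.

Lemma excess_monotone x y : 1 <= x <= y -> excess x <= excess y.
Proof.
  intros [Hx1 Hxy]. unfold excess.
  pose proof (ln_le_sub1 (y / x) ltac:(apply Rdiv_lt_0_compat; lra)) as Hr.
  unfold Rdiv in Hr. rewrite ln_mult, ln_Rinv in Hr by (try apply Rinv_0_lt_compat; lra).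
  assert (y * / x - 1 <= y - x).
  { apply (Rmult_le_reg_r x); [lra|]. field_simplify; try lra. nra. }
  lra.
Qed.

Lemma excess_scale_le eps r x : 0 < eps -> / (1 + eps / 2) <= r <= 1 + eps / 2 -> 0 < x ->
  excess (r * x) <= (1 + eps) * excess x.
Proof.
  intros He [Hr1 Hr2] Hx.
  assert (Hr : 0 < r) by (pose proof (Rinv_0_lt_compat (1 + eps / 2) ltac:(lra)); lra).
  pose proof (excess_ge1 x Hx) as Hex. unfold excess in *.
  rewrite ln_mult by lra.
  destruct (Rle_lt_dec r 1) as [Hle | Hgt].
  - pose proof (ln_le_compat _ _ (Rinv_0_lt_compat (1 + eps / 2) ltac:(lra)) Hr1) as Hlnr.
    rewrite ln_Rinv in Hlnr by lra.
    pose proof (ln_le_sub1 (1 + eps / 2) ltac:(lra)).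
    assert (r * x <= x) by nra.
    assert (eps * 1 <= eps * (x - ln x)) by (apply Rmult_le_compat_l; lra). lra.
  - pose proof (ln_le_compat 1 r ltac:(lra) ltac:(lra)) as Hlnr. rewrite ln_1 in Hlnr.
    pose proof (ln_le_half x Hx).
    assert (r * x <= x + eps / 2 * x) by nra.
    assert (eps * (x / 2) <= eps * (x - ln x)) by (apply Rmult_le_compat_l; lra). lra.
Qed.

Lemma sumR_le f g n : (forall i, (1 <= i <= n)%nat -> f i <= g i) -> sumR f n <= sumR g n.
Proof.
  induction n as [|n IH]; simpl; intros H; [lra|].
  assert (sumR f n <= sumR g n) by (apply IH; intros; apply H; lia).
  assert (f (S n) <= g (S n)) by (apply H; lia). lra.
Qed.

Lemma sumR_ext f g n : (forall i, (1 <= i <= n)%nat -> f i = g i) -> sumR f n = sumR g n.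
Proof. intros H. apply Rle_antisym; apply sumR_le; intros i Hi; rewrite H; auto; lra. Qed.

Lemma sumR_plus f g n : sumR (fun i => f i + g i) n = sumR f n + sumR g n.
Proof. induction n; simpl; [ring | rewrite IHn; ring]. Qed.

Lemma sumR_scal c f n : sumR (fun i => c * f i) n = c * sumR f n.
Proof. induction n; simpl; [ring | rewrite IHn; ring]. Qed.

Lemma sumR_const c n : sumR (fun _ => c) n = INR n * c.
Proof. induction n; simpl sumR; [simpl; ring | rewrite IHn, S_INR; ring]. Qed.

Lemma sumR_nonneg f n : (forall i, (1 <= i <= n)%nat -> 0 <= f i) -> 0 <= sumR f n.
Proof. intros H. rewrite <- (Rmult_0_r (INR n)), <- sumR_const. apply sumR_le. exact H. Qed.

Lemma sumR_pos f n : (0 < n)%nat -> (forall i, (1 <= i <= n)%nat -> 0 < f i) -> 0 < sumR f n.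
Proof.
  destruct n as [|n]; [lia|]. intros _ H. simpl.
  assert (0 <= sumR f n) by (apply sumR_nonneg; intros; apply Rlt_le, H; lia).
  assert (0 < f (S n)) by (apply H; lia). lra.
Qed.

Lemma ln_prodR f n : (forall i, (1 <= i <= n)%nat -> 0 < f i) ->
  0 < prodR f n /\ ln (prodR f n) = sumR (fun i => ln (f i)) n.
Proof.
  induction n as [|n IH]; simpl; intros H; [split; [lra | apply ln_1]|].
  destruct IH as [Hp Hln]; [intros; apply H; lia|].
  assert (0 < f (S n)) by (apply H; lia).
  split; [apply Rmult_lt_0_compat; lra | rewrite ln_mult, Hln; auto].
Qed.

Lemma minS_le s n i : (1 <= i <= n)%nat -> minS s n <= s i.
Proof.
  induction n as [|n IH]; intros Hi; [lia|]. simpl.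
  destruct (Nat.eq_dec i (S n)) as [-> | Hne]; [apply Rmin_r|].
  eapply Rle_trans; [apply Rmin_l | apply IH; lia].
Qed.

Lemma le_maxS s n i : (1 <= i <= n)%nat -> s i <= maxS s n.
Proof.
  induction n as [|n IH]; intros Hi; [lia|]. simpl.
  destruct (Nat.eq_dec i (S n)) as [-> | Hne]; [apply Rmax_r|].
  eapply Rle_trans; [apply IH; lia | apply Rmax_l].
Qed.

Lemma minS_pos s n : (0 < n)%nat -> (forall i, (1 <= i <= n)%nat -> 0 < s i) -> 0 < minS s n.
Proof.
  induction n as [|n IH]; intros Hn Hs; [lia|]. simpl.
  destruct n as [|n]; [apply Rmin_glb_lt; apply Hs; lia|].
  apply Rmin_glb_lt; [apply IH; [lia | intros i Hi; apply Hs; lia] | apply Hs; lia].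
Qed.

Definition between (u v z : R) : Prop := Rmin u v <= z <= Rmax u v.

Definition clamp (lo hi t : R) : R := Rmax lo (Rmin hi t).

Fixpoint max_upto (f : nat -> R) (k : nat) : R :=
  match k with O => f O | S k' => Rmax (max_upto f k') (f (S k')) end.

Lemma le_max_upto f k l : (l <= k)%nat -> f l <= max_upto f k.
Proof.
  induction k as [|k IH]; intros Hl; simpl.
  - replace l with O by lia. lra.
  - destruct (Nat.eq_dec l (S k)) as [-> | Hne]; [apply Rmax_r|].
    eapply Rle_trans; [apply IH; lia | apply Rmax_l].
Qed.

Lemma max_upto_le f k y : (forall l, (l <= k)%nat -> f l <= y) -> max_upto f k <= y.
Proof.
  induction k as [|k IH]; intros H; simpl; [apply H; lia|].
  apply Rmax_lub; [apply IH; intros; apply H | apply H]; lia.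
Qed.

(* One-dimensional Helly: the segments pairwise intersect because [x] rises and [y] falls. *)
Lemma between_common_point (x y : nat -> R) k :
  (forall l l', (l <= l')%nat -> x l <= x l') ->
  (forall l l', (l < l')%nat -> y l' <= y l) ->
  exists z, forall l, (l <= k)%nat -> between (x l) (y l) z.
Proof.
  intros Hx Hy.
  assert (Hpair : forall l l', Rmin (x l) (y l) <= Rmax (x l') (y l')).
  { intros l l'. destruct (Nat.lt_ge_cases l' l) as [Hlt | Hge].
    - pose proof (Hy l' l Hlt). pose proof (Rmin_r (x l) (y l)).
      pose proof (Rmax_r (x l') (y l')). lra.
    - pose proof (Hx l l' Hge). pose proof (Rmin_l (x l) (y l)).
      pose proof (Rmax_l (x l') (y l')). lra. }
  exists (max_upto (fun l => Rmin (x l) (y l)) k). intros l Hl. split.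
  - exact (le_max_upto (fun l => Rmin (x l) (y l)) k l Hl).
  - apply max_upto_le. intros; apply Hpair.
Qed.

Lemma between_scale u v z c : 0 < c -> between u v z -> between (u * c) (v * c) (z * c).
Proof.
  intros Hc. unfold between, Rmin, Rmax.
  destruct (Rle_dec u v); destruct (Rle_dec (u * c) (v * c)); intros [H1 H2];
    split; try (apply Rmult_le_compat_r; lra); nra.
Qed.

Lemma clamp_between lo hi t : lo <= hi -> lo <= clamp lo hi t <= hi.
Proof.
  intros H. unfold clamp. split; [apply Rmax_l|].
  apply Rmax_lub; [lra | apply Rmin_l].
Qed.

Lemma excess_between_clamp lo hi s t t' :
  0 < s -> 0 < t -> s * lo <= 1 <= s * hi -> lo <= hi ->
  between t (clamp lo hi t) t' -> excess (t' * s) <= excess (t * s).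
Proof.
  intros Hs Ht [Hlo Hhi] Hlh. unfold between, clamp.
  destruct (Rle_dec hi t) as [Hht | Hth].
  - rewrite (Rmin_left hi), (Rmax_right lo), (Rmin_right t), (Rmax_left t) by lra.
    intros [H1 H2]. apply excess_monotone. nra.
  - rewrite (Rmin_right hi) by lra.
    destruct (Rle_dec lo t) as [Hlt | Htl].
    + rewrite (Rmax_right lo), (Rmin_left t t), (Rmax_left t t) by lra.
      intros [H1 H2]. replace t' with t by lra. lra.
    + rewrite (Rmax_left lo), (Rmin_left t), (Rmax_right t) by lra.
      intros [H1 H2]. apply excess_antitone; nra.
Qed.

Lemma exists_geometric_between_clamp lo r a b k : 0 < lo -> 1 <= r <= a -> 0 < b ->
  exists b', 0 < b' /\
    forall l, (l <= k)%nat -> between (b * a ^ l) (clamp lo (lo * r) (b * a ^ l)) (b' * r ^ l).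
Proof.
  intros Hlo [Hr Hra] Hb.
  assert (Hrl : forall l, 0 < r ^ l) by (intros; apply pow_lt; lra).
  set (x l := b * a ^ l / r ^ l). set (y l := clamp lo (lo * r) (b * a ^ l) / r ^ l).
  assert (Hclamp : forall l, lo <= clamp lo (lo * r) (b * a ^ l) <= lo * r)
    by (intros; apply clamp_between; nra).
  destruct (between_common_point x y k) as [z Hz].
  - intros l l' Hll. unfold x, Rdiv. rewrite !Rmult_assoc, <- !pow_inv, <- !Rpow_mult_distr.
    apply Rmult_le_compat_l; [lra|]. apply Rle_pow; [|exact Hll].
    apply (Rmult_le_reg_r r); [lra|]. rewrite Rmult_assoc, Rinv_l by lra. lra.
  - intros l l' Hll. unfold y.
    destruct (Hclamp l) as [Hl _]. destruct (Hclamp l') as [_ Hl'].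
    destruct l' as [|l'']; [lia|].
    assert (r ^ l <= r ^ l'') by (apply Rle_pow; [lra | lia]).
    pose proof (Hrl l). pose proof (Hrl l'').
    apply (Rle_trans _ (lo / r ^ l'')).
    + simpl. replace (lo / r ^ l'') with (lo * r / (r * r ^ l'')) by (field; repeat split; lra).
      unfold Rdiv. apply Rmult_le_compat_r; [left; apply Rinv_0_lt_compat; nra | exact Hl'].
    + apply (Rle_trans _ (lo / r ^ l)).
      * unfold Rdiv. apply Rmult_le_compat_l; [lra|]. apply Rinv_le_contravar; lra.
      * unfold Rdiv. apply Rmult_le_compat_r; [left; apply Rinv_0_lt_compat|]; lra.
  - assert (Hx0 : 0 < x O).
    { unfold x. apply Rdiv_lt_0_compat; [apply Rmult_lt_0_compat; [|apply pow_lt] | apply Hrl];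
        lra. }
    assert (Hy0 : 0 < y O).
    { unfold y. destruct (Hclamp O). apply Rdiv_lt_0_compat; [lra | apply Hrl]. }
    exists z. split.
    + destruct (Hz O (Nat.le_0_l k)) as [Hmin _]. pose proof (Rmin_glb_lt _ _ _ Hx0 Hy0). lra.
    + intros l Hl. pose proof (between_scale _ _ _ (r ^ l) (Hrl l) (Hz l Hl)) as Hs.
      assert (Hrl0 : r ^ l <> 0) by (specialize (Hrl l); lra).
      unfold x, y in Hs.
      replace (b * a ^ l / r ^ l * r ^ l) with (b * a ^ l) in Hs by (field; exact Hrl0).
      replace (clamp lo (lo * r) (b * a ^ l) / r ^ l * r ^ l)
        with (clamp lo (lo * r) (b * a ^ l)) in Hs by (field; exact Hrl0).
      exact Hs.
Qed.

Definition excess_sum (n : nat) (s : nat -> R) (L : nat -> nat) (a b : R) : R :=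
  sumR (fun i => excess (b * a ^ L i * s i)) n.

Definition penalty (n : nat) (gamma : R) (L : nat -> nat) : R :=
  sumR (fun i => pen n gamma (lprev L i) (L i)) n.

Lemma neg_ln_p_exp x lam : 0 < x -> 0 < lam -> - ln (p_exp x lam) = excess (lam * x) + ln x.
Proof.
  intros Hx Hl. unfold p_exp, excess.
  rewrite ln_mult, ln_exp, ln_mult by (auto; apply exp_pos). ring.
Qed.

Lemma pen_nonneg n gamma x y : (0 < n)%nat -> 0 < gamma -> 0 <= pen n gamma x y.
Proof.
  intros Hn Hg. unfold pen.
  assert (0 <= ln (INR n)) by (rewrite <- ln_1; apply ln_le_compat; [lra | apply (le_INR 1); lia]).
  apply Rmult_le_pos; [apply Rmult_le_pos; [apply Rmax_r | lra] | exact H].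
Qed.

Lemma excess_sum_scale_min (x : nat -> R) n b : (0 < n)%nat ->
  (forall i, (1 <= i <= n)%nat -> 0 < x i) -> 0 < b ->
  sumR (fun i => excess (INR n / sumR x n * x i)) n <= sumR (fun i => excess (b * x i)) n.
Proof.
  intros Hn Hx Hb.
  assert (Hsum : forall c, 0 < c -> sumR (fun i => excess (c * x i)) n
                   = c * sumR x n - INR n * ln c - sumR (fun i => ln (x i)) n).
  { intros c Hc.
    rewrite (sumR_ext _ (fun i => c * x i + (- ln c + -1 * ln (x i))) n).
    - rewrite !sumR_plus, !sumR_scal, sumR_const. ring.
    - intros i Hi. unfold excess. rewrite ln_mult by (auto; apply Hx; exact Hi). ring. }
  set (X := sumR x n) in *.
  assert (HX : 0 < X) by (apply sumR_pos; auto).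
  assert (HN : 0 < INR n) by (apply lt_0_INR; lia).
  rewrite !Hsum by (try apply Rdiv_lt_0_compat; lra).
  set (u := b * X / INR n).
  assert (Hu : 0 < u) by (apply Rdiv_lt_0_compat; nra).
  assert (Hlnu : ln u = ln b - ln (INR n / X)).
  { unfold u, Rdiv. rewrite !ln_mult, !ln_Rinv by (try apply Rinv_0_lt_compat; nra). ring. }
  (* the two sides differ by [n * (excess u - 1)] *)
  assert (Hgap : INR n * 1 <= INR n * (u - (ln b - ln (INR n / X)))).
  { rewrite <- Hlnu. apply Rmult_le_compat_l; [lra | apply excess_ge1; exact Hu]. }
  replace (INR n / X * X) with (INR n) by (field; lra).
  replace (b * X) with (INR n * u) by (unfold u; field; lra).
  lra.
Qed.

Lemma grid_bracket c t g0 : 1 < c -> 0 < t <= g0 -> exists j, t <= g0 / c ^ j < c * t.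
Proof.
  intros Hc Ht.
  assert (Hbr : forall N g, t <= g < t * c ^ N -> exists j, t <= g / c ^ j < c * t).
  { induction N as [|N IH]; intros g Hg; simpl in Hg; [lra|].
    destruct (Rlt_le_dec g (c * t)) as [Hlt | Hge].
    - exists 0%nat. simpl. rewrite Rdiv_1_r. lra.
    - destruct (IH (g / c)) as [j Hj].
      + split; [apply (Rmult_le_reg_l c); [lra|]; field_simplify; lra|].
        apply (Rmult_lt_reg_l c); [lra|]. field_simplify; lra.
      + exists (S j). simpl. replace (g / (c * c ^ j)) with (g / c / c ^ j); [exact Hj|].
        field. split; [apply pow_nonzero|]; lra. }
  destruct (Pow_x_infinity c ltac:(rewrite Rabs_pos_eq; lra) (g0 / t + 1)) as [N HN].
  specialize (HN N (le_n N)). rewrite Rabs_pos_eq in HN by (apply pow_le; lra).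
  apply (Hbr N). split; [lra|].
  apply (Rmult_lt_reg_l (/ t)); [apply Rinv_0_lt_compat; lra|].
  field_simplify; lra.
Qed.

Lemma Rpower_inv_pow x m : 0 < x -> (0 < m)%nat -> Rpower x (/ INR m) ^ m = x.
Proof.
  intros Hx Hm. assert (0 < INR m) by (apply lt_0_INR; exact Hm).
  rewrite <- Rpower_pow by (unfold Rpower; apply exp_pos).
  rewrite Rpower_mult, Rinv_l by lra. apply Rpower_1; exact Hx.
Qed.

Lemma Rpower_inv_gt1 x m : 1 < x -> (0 < m)%nat -> 1 < Rpower x (/ INR m).
Proof.
  intros Hx Hm. assert (0 < INR m) by (apply lt_0_INR; exact Hm).
  rewrite <- (Rpower_O x) by lra. apply Rpower_lt; [exact Hx|].
  apply Rinv_0_lt_compat; exact H.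
Qed.

Lemma pow_le_of_sq_pow q c k eps : 1 <= q <= c -> c ^ (2 * k) = 1 + eps -> 0 < eps ->
  q ^ k <= 1 + eps / 2.
Proof.
  intros Hq Hc He.
  assert (HQ : 1 <= q ^ k) by (apply pow_R1_Rle; lra).
  assert (q ^ k * q ^ k <= 1 + eps).
  { rewrite <- pow_add, <- Hc. replace (k + k)%nat with (2 * k)%nat by lia.
    apply pow_incr; lra. }
  nra.
Qed.

Lemma rate_ratio_bounds q rho k l eps : 1 <= q -> q ^ k <= 1 + eps / 2 -> (l <= k)%nat ->
  0 < eps -> / q ^ k <= rho <= (1 + eps / 2) / q ^ k ->
  / (1 + eps / 2) <= rho * q ^ l <= 1 + eps / 2.
Proof.
  intros Hq HQ Hl He [Hrho1 Hrho2].
  assert (Hql : 1 <= q ^ l <= q ^ k) by (split; [apply pow_R1_Rle | apply Rle_pow]; lra || lia).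
  assert (HQinv : 0 < / q ^ k) by (apply Rinv_0_lt_compat; lra).
  split.
  - apply (Rle_trans _ (/ q ^ k)); [apply Rinv_le_contravar; lra | nra].
  - apply (Rle_trans _ ((1 + eps / 2) / q ^ k * q ^ k)).
    + apply Rmult_le_compat; lra.
    + unfold Rdiv. rewrite Rmult_assoc, Rinv_l; lra.
Qed.

Section Scores.

Variables (n : nat) (s : nat -> R).
Hypothesis Hn : (0 < n)%nat.
Hypothesis Hs : forall i, (1 <= i <= n)%nat -> 0 < s i.

Lemma maxS_div_minS_ge1 : 1 <= maxS s n / minS s n.
Proof.
  pose proof (minS_pos s n Hn Hs).
  pose proof (minS_le s n 1 ltac:(lia)). pose proof (le_maxS s n 1 ltac:(lia)).
  apply (Rmult_le_reg_r (minS s n)); [lra|]. unfold Rdiv. rewrite Rmult_assoc, Rinv_l; lra.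
Qed.

Lemma psi_sum : psi n s = sumR (fun i => ln (s i)) n.
Proof.
  destruct (ln_prodR s n Hs) as [_ Hln].
  assert (INR n <> 0) by (apply not_0_INR; lia).
  unfold psi, geo_mean, Rpower. rewrite ln_exp, <- Hln. field. exact H.
Qed.

Lemma score_sub_psi L a b gamma : 0 < a -> 0 < b ->
  score_exp n s L a b gamma - psi n s = excess_sum n s L a b + penalty n gamma L.
Proof.
  intros Ha Hb. unfold score_exp, excess_sum, penalty. rewrite psi_sum.
  rewrite (sumR_ext _ (fun i => excess (b * a ^ L i * s i) + pen n gamma (lprev L i) (L i)
                              + ln (s i)) n).
  - rewrite !sumR_plus. ring.
  - intros i Hi.
    assert (0 < b * a ^ L i) by (apply Rmult_lt_0_compat; [|apply pow_lt]; lra).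
    rewrite neg_ln_p_exp by auto. ring.
Qed.

Lemma excess_sum_reduce_alpha k L a b : valid_levels n k L ->
  maxS s n / minS s n <= a -> 0 < b ->
  exists b', 0 < b' /\ excess_sum n s L (maxS s n / minS s n) b' <= excess_sum n s L a b.
Proof.
  intros HL Ha Hb.
  set (mn := minS s n) in *. set (mx := maxS s n) in *.
  assert (Hmn : 0 < mn) by (apply minS_pos; auto).
  assert (Hr : 1 <= mx / mn) by exact maxS_div_minS_ge1.
  assert (Hmx : 0 < mx)
    by (pose proof (le_maxS s n 1 ltac:(lia)); pose proof (Hs 1 ltac:(lia)); unfold mx; lra).
  assert (Hlo : 0 < / mx) by (apply Rinv_0_lt_compat; lra).
  destruct (exists_geometric_between_clamp (/ mx) (mx / mn) a b k Hlo ltac:(lra) Hb)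
    as [b' [Hb' Hbetw]].
  exists b'. split; [exact Hb'|].
  apply sumR_le. intros i Hi.
  assert (Hsi : mn <= s i <= mx) by (split; [apply minS_le | apply le_maxS]; exact Hi).
  pose proof (Hs i Hi).
  apply (excess_between_clamp (/ mx) (/ mx * (mx / mn))); auto.
  - apply Rmult_lt_0_compat; [exact Hb | apply pow_lt; lra].
  - replace (/ mx * (mx / mn)) with (/ mn) by (field; lra). split.
    + apply (Rmult_le_reg_r mx); [lra|]. field_simplify; lra.
    + apply (Rmult_le_reg_r mn); [lra|]. field_simplify; lra.
  - rewrite <- (Rmult_1_r (/ mx)) at 1. apply Rmult_le_compat_l; lra.
Qed.

Lemma excess_sum_opt_beta L a b : 0 < a -> 0 < b ->
  excess_sum n s L a (INR n / sumR (fun i => a ^ L i * s i) n) <= excess_sum n s L a b.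
Proof.
  intros Ha Hb. unfold excess_sum.
  assert (Hassoc : forall c, sumR (fun i => excess (c * a ^ L i * s i)) n
                             = sumR (fun i => excess (c * (a ^ L i * s i))) n)
    by (intros c; apply sumR_ext; intros; rewrite Rmult_assoc; reflexivity).
  rewrite !Hassoc. apply excess_sum_scale_min; auto.
  intros i Hi. apply Rmult_lt_0_compat; [apply pow_lt; lra | auto].
Qed.

Lemma excess_sum_rescale k L a b a' b' eps : valid_levels n k L -> 0 < a -> 0 < b -> 0 < eps ->
  (forall l, (l <= k)%nat -> / (1 + eps / 2) <= b' * a' ^ l / (b * a ^ l) <= 1 + eps / 2) ->
  excess_sum n s L a' b' <= (1 + eps) * excess_sum n s L a b.
Proof.
  intros HL Ha Hb He Hratio. unfold excess_sum. rewrite <- sumR_scal.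
  apply sumR_le. intros i Hi.
  assert (Hl : 0 < b * a ^ L i) by (apply Rmult_lt_0_compat; [|apply pow_lt]; lra).
  replace (b' * a' ^ L i * s i) with (b' * a' ^ L i / (b * a ^ L i) * (b * a ^ L i * s i))
    by (field; split; [apply pow_nonzero |]; lra).
  apply excess_scale_le; auto.
  apply Rmult_lt_0_compat; auto.
Qed.

Lemma excess_sum_reduce_to_band k L a b : valid_levels n k L -> 1 <= a -> 0 < b ->
  exists a1 b1, 1 <= a1 <= maxS s n / minS s n /\ 0 < b1 /\
    excess_sum n s L a1 b1 <= excess_sum n s L a b.
Proof.
  intros HL Ha Hb. pose proof maxS_div_minS_ge1 as Ha0.
  destruct (Rle_lt_dec a (maxS s n / minS s n)) as [Hle | Hgt].
  - exists a, b. repeat split; lra.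
  - destruct (excess_sum_reduce_alpha k L a b HL ltac:(lra) Hb) as [b1 [Hb1 Hle]].
    exists (maxS s n / minS s n), b1. repeat split; lra.
Qed.

Lemma weighted_sum_bounds k L a : valid_levels n k L -> 1 <= a ->
  sumR s n <= sumR (fun i => a ^ L i * s i) n <= a ^ k * sumR s n.
Proof.
  intros HL Ha. rewrite <- sumR_scal. split; apply sumR_le; intros i Hi; pose proof (Hs i Hi).
  - rewrite <- (Rmult_1_l (s i)) at 1. apply Rmult_le_compat_r; [lra|]. apply pow_R1_Rle; lra.
  - apply Rmult_le_compat_r; [lra|]. apply Rle_pow; [lra | exact (HL i Hi)].
Qed.

Lemma mean_pos : 0 < mean n s.
Proof. apply Rdiv_lt_0_compat; [apply sumR_pos; auto | apply lt_0_INR; exact Hn]. Qed.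

Lemma tested_pair_pos k eps a b : tested_pair n k s eps a b -> 1 <= a /\ 0 < b.
Proof.
  intros (j & m & _ & Ha & _ & Hb). split; [exact Ha|].
  eapply Rlt_le_trans; [|exact Hb].
  apply Rinv_0_lt_compat, Rmult_lt_0_compat; [apply pow_lt; lra | exact mean_pos].
Qed.

Lemma alpha_grid_round k a eps : (0 < k)%nat -> 0 < eps -> 1 <= a <= maxS s n / minS s n ->
  exists j, a <= approx_alpha n k s eps j /\ (approx_alpha n k s eps j / a) ^ k <= 1 + eps / 2.
Proof.
  intros Hk He Ha.
  set (c := Rpower (1 + eps) (/ (2 * INR k))).
  assert (Hc_def : c = Rpower (1 + eps) (/ INR (2 * k)))
    by (unfold c; rewrite mult_INR; simpl INR; f_equal; f_equal; ring).
  assert (Hc1 : 1 < c) by (rewrite Hc_def; apply Rpower_inv_gt1; lia || lra).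
  assert (Hck : c ^ (2 * k) = 1 + eps) by (rewrite Hc_def; apply Rpower_inv_pow; lia || lra).
  destruct (grid_bracket c a (maxS s n / minS s n) Hc1 ltac:(lra)) as [j [Hj1 Hj2]].
  change (maxS s n / minS s n / c ^ j) with (approx_alpha n k s eps j) in Hj1, Hj2.
  exists j. split; [exact Hj1|]. apply (pow_le_of_sq_pow _ c); [|exact Hck | exact He].
  split; apply (Rmult_le_reg_r a); try lra; unfold Rdiv; rewrite Rmult_assoc, Rinv_l; lra.
Qed.

Lemma excess_sum_grid_approx k L a eps : (0 < k)%nat -> 0 < eps ->
  valid_levels n k L -> 1 <= a <= maxS s n / minS s n ->
  exists a' b', tested_pair n k s eps a' b' /\
    excess_sum n s L a' b'
      <= (1 + eps) * excess_sum n s L a (INR n / sumR (fun i => a ^ L i * s i) n).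
Proof.
  intros Hk He HL Ha.
  destruct (alpha_grid_round k a eps Hk He Ha) as [j [Hj HQ]].
  set (a' := approx_alpha n k s eps j) in *.
  set (q := a' / a) in *.
  assert (Hq : 1 <= q) by (apply (Rmult_le_reg_r a); [lra|]; unfold q; field_simplify; lra).
  assert (HQ1 : 1 <= q ^ k) by (apply pow_R1_Rle; lra).
  set (A := sumR (fun i => a ^ L i * s i) n).
  set (S := sumR s n).
  destruct (weighted_sum_bounds k L a HL ltac:(lra)) as [HA1 HA2]. fold A S in HA1, HA2.
  assert (HS : 0 < S) by (apply sumR_pos; auto).
  assert (HN : 0 < INR n) by (apply lt_0_INR; exact Hn).
  assert (Hak : 0 < a ^ k) by (apply pow_lt; lra).
  set (b0 := INR n / A).
  assert (Hb0 : 0 < b0) by (apply Rdiv_lt_0_compat; lra).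
  (* aim beta at b0 / q^k to offset the factor q^l <= q^k that rounding alpha adds to each rate *)
  assert (Ht : 0 < b0 / q ^ k <= / mean n s).
  { split; [apply Rdiv_lt_0_compat; lra|]. unfold mean, b0, Rdiv. fold S.
    rewrite Rinv_mult, Rinv_inv, Rmult_assoc, Rmult_comm. apply Rmult_le_compat_r; [lra|].
    rewrite <- Rinv_mult. apply Rinv_le_contravar; nra. }
  destruct (grid_bracket (1 + eps / 2) (b0 / q ^ k) (/ mean n s) ltac:(lra) Ht) as [m [Hm1 Hm2]].
  set (b' := / mean n s / (1 + eps / 2) ^ m) in *.
  exists a', b'. split.
  - exists j, m. repeat split; try lra.
    apply (Rle_trans _ (b0 / q ^ k)); [|exact Hm1].
    replace (a' ^ k) with (q ^ k * a ^ k)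
      by (unfold q; rewrite <- Rpow_mult_distr; f_equal; field; lra).
    unfold mean, b0. fold S.
    replace (/ (q ^ k * a ^ k * (S / INR n))) with (INR n / (q ^ k * (a ^ k * S))) by (field; lra).
    replace (INR n / A / q ^ k) with (INR n / (q ^ k * A)) by (field; lra).
    unfold Rdiv. apply Rmult_le_compat_l; [lra|]. apply Rinv_le_contravar; nra.
  - apply (excess_sum_rescale k); auto; try lra.
    intros l Hl.
    replace (b' * a' ^ l / (b0 * a ^ l)) with (b' / b0 * q ^ l)
      by (unfold q, Rdiv; rewrite Rpow_mult_distr, pow_inv; field;
          split; [apply pow_nonzero|]; lra).
    apply (rate_ratio_bounds q _ k); auto.
    split; apply (Rmult_le_reg_r b0); try lra; unfold Rdiv; rewrite Rmult_assoc, Rinv_l; lra.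
Qed.

End Scores.

Theorem proposition8
  (n k : nat) (s : nat -> R) (gamma eps : R)
  (Hn : (0 < n)%nat) (Hs : forall i, (1 <= i <= n)%nat -> 0 < s i)
  (Hgamma : 0 < gamma) (Hk : (0 < k)%nat) (Heps : 0 < eps)
  (* (Lopt, aopt, bopt) is an optimal solution of Exp for S, gamma, k *)
  (Lopt : nat -> nat) (aopt bopt : R)
  (HLopt : valid_levels n k Lopt) (Haopt : 1 <= aopt) (Hbopt : 0 < bopt)
  (Hopt : forall (L : nat -> nat) (a b : R), valid_levels n k L -> 1 <= a -> 0 < b ->
     score_exp n s Lopt aopt bopt gamma <= score_exp n s L a b gamma)
  (* the Viterbi subroutine *)
  (viterbi : R -> R -> nat -> nat)
  (Hvit : forall a b, viterbi_spec n k s gamma a b (viterbi a b))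
  (* the output (L, alpha, beta) of ApproxExp: an observed triple of smallest score *)
  (alpha beta : R)
  (Htested : tested_pair n k s eps alpha beta)
  (Hbest : forall a b, tested_pair n k s eps a b ->
     score_exp n s (viterbi alpha beta) alpha beta gamma
       <= score_exp n s (viterbi a b) a b gamma) :
  score_exp n s (viterbi alpha beta) alpha beta gamma - psi n s
    <= (1 + eps) * (score_exp n s Lopt aopt bopt gamma - psi n s)
  /\ (1 <= geo_mean n s ->
      score_exp n s (viterbi alpha beta) alpha beta gamma
        <= (1 + eps) * score_exp n s Lopt aopt bopt gamma).
Proof.
  destruct (excess_sum_reduce_to_band n s Hn Hs k Lopt aopt bopt HLopt Haopt Hbopt)
    as (a1 & b1 & Ha1 & Hb1 & Hband).
  pose proof (excess_sum_opt_beta n s Hn Hs Lopt a1 b1 ltac:(lra) Hb1) as Hbeta.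
  destruct (excess_sum_grid_approx n s Hn Hs k Lopt a1 eps Hk Heps HLopt Ha1)
    as (a' & b' & Htest & Happrox).
  destruct (tested_pair_pos n s Hn Hs k eps a' b' Htest) as [Ha' Hb'].
  pose proof (Hbest a' b' Htest) as Hout.
  pose proof (proj2 (Hvit a' b') Lopt HLopt) as Hviterbi.
  pose proof (score_sub_psi n s Hn Hs Lopt a' b' gamma ltac:(lra) Hb') as Hsc'.
  pose proof (score_sub_psi n s Hn Hs Lopt aopt bopt gamma ltac:(lra) Hbopt) as Hsc.
  assert (HP : 0 <= penalty n gamma Lopt)
    by (apply sumR_nonneg; intros; apply pen_nonneg; auto).
  assert (Hmain : score_exp n s (viterbi alpha beta) alpha beta gamma - psi n s
                  <= (1 + eps) * (score_exp n s Lopt aopt bopt gamma - psi n s))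
    by (rewrite Hsc; nra).
  split; [exact Hmain|]. intros Hg.
  assert (0 <= psi n s).
  { apply Rmult_le_pos; [apply pos_INR|]. rewrite <- ln_1. apply ln_le_compat; lra. }
  nra.
Qed.
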